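(* Let $\mathcal M(R,F)$ be a quantum matrix algebra of BMW type with matrix of generators $M$. Then for every $n\ge1$, $$K_nM_{\bar n}M_{\overline{n+1}}=M_{\bar n}M_{\overline{n+1}}K_n=\mu^{-2}K_n\,g .$$
   Context: Let $V$ be a complex vector space of dimension $N$ with a fixed basis. For $X\in\mathrm{End}(V\otimes V)$, $X_m$ denotes the operator on $V^{\otimes n}$ acting as $X$ on factors $m,m+1$ and as identity elsewhere; for $Y\in\mathrm{End}(V)$, $Y_m$ acts on factor $m$. $P$ is the flip; $\mathrm{Tr}_{(i)}$ is partial trace. $X$ is skew invertible if there is $\Psi_X$ with $\mathrm{Tr}_{(2)}X_{12}\Psi_{X,23}=\mathrm{Tr}_{(2)}\Psi_{X,12}X_{23}=P_{13}$; $C_X:=\mathrm{Tr}_{(1)}\Psi_{X,12}$, $D_X:=\mathrm{Tr}_{(2)}\Psi_{X,12}$; strictly skew invertible if moreover $C_X$ or $D_X$ is invertible. An R-matrix is an invertible $R$ with $R_1R_2R_1=R_2R_1R_2$. $\{R,F\}$ is compatible if $R_1F_2F_1=F_2F_1R_2$, $R_2F_1F_2=F_1F_2R_1$. Fix $q\in\mathbb C\setminus\{0,\pm1\}$, $\mu\in\mathbb C\setminus\{0,q,-q^{-1}\}$; $R$ is of BMW type if $(qI-R)(q^{-1}I+R)(\mu I-R)=0$ and $K:=\mu^{-1}(q-q^{-1})^{-1}(qI-R)(q^{-1}I+R)$ satisfies $K_2K_1=R_1^{\epsilon}R_2^{\epsilon}K_1$ ($\epsilon=\pm1$), $K_1K_2K_1=K_1$.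 R-trace: $\mathrm{Tr}_{R,(i_1,\dots,i_k)}X:=\mathrm{Tr}_{(i_1,\dots,i_k)}(D_{R,i_1}\cdots D_{R,i_k}X)$. $\eta:=\frac{(q-\mu)(q^{-1}+\mu)}{\mu(q-q^{-1})}$. Quantum matrix algebra of BMW type: $\{R,F\}$ compatible pair of strictly skew invertible R-matrices, $R$ of BMW type; $\mathcal M(R,F)$ is the free algebra $\mathbb C\langle1,M_a^b\rangle_{1\le a,b\le N}$ modulo the entries of $R_1M_{\bar1}M_{\bar2}=M_{\bar1}M_{\bar2}R_1$, where $M=\|M_a^b\|$, $M_{\bar1}:=M_1$, $M_{\bar i}:=F_{i-1}M_{\overline{i-1}}F_{i-1}^{-1}$. The 2-contraction is $g:=\eta^{-1}\mathrm{Tr}_{R,(1,2)}(M_{\bar1}M_{\bar2}K_1)\in\mathcal M(R,F)$. *)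

From HB Require Import structures.
From mathcomp Require Import all_boot all_order all_algebra.
Set Implicit Arguments. Unset Strict Implicit. Unset Printing Implicit Defensive.
Import GRing.Theory Num.Theory.
Local Open Scope ring_scope.

(* V has dimension N with basis indexed by 'I_N.  A basis vector of V^{(x)k}
   is indexed by a multi-index  i : idx N k  (i l = index in factor l, 0-based).
   An operator on V^{(x)k} with entries in a ring T is a function
   X : idx N k -> idx N k -> T,  X i j = matrix element  X_{i}^{j}
   (row i, column j).  Products are matrix products (order of entries kept,
   which matters when T is noncommutative).  Factor positions are 0-based:
   the paper's factor m is position m-1. *)

Definition idx (N k : nat) := {ffun 'I_k -> 'I_N}.
Definition op (N : nat) (T : Type) (k : nat) := idx N k -> idx N k -> T.

Section Ops.
Variable N : nat.

Definition opeq (T : Type) k (X Y : op N T k) := forall i j, X i j = Y i j.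

Definition opmul (T : pzRingType) k (X Y : op N T k) : op N T k :=
  fun i j => \sum_(l : idx N k) X i l * Y l j.
Definition opid (T : pzRingType) k : op N T k := fun i j => (i == j)%:R.
Definition opadd (T : pzRingType) k (X Y : op N T k) : op N T k :=
  fun i j => X i j + Y i j.
Definition opscale (T : pzRingType) k (c : T) (X : op N T k) : op N T k :=
  fun i j => c * X i j.
Definition opzero (T : pzRingType) k : op N T k := fun _ _ => 0.
Definition opmap (S T : Type) k (f : S -> T) (X : op N S k) : op N T k :=
  fun i j => f (X i j).
Definition opmulr (T : pzRingType) k (X : op N T k) (a : T) : op N T k :=
  fun i j => X i j * a.

Definition pair2 (x y : 'I_N) : idx N 2 :=
  [ffun t : 'I_2 => if val t == 0%N then x else y].

Definition emb1 (T : pzRingType) k (p : 'I_k) (Y : 'M[T]_N) : op N T k :=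
  fun i j => Y (i p) (j p) * ([forall l, (l != p) ==> (i l == j l)] %:R).

(* X_p : X acting on factors p, p+1 of V^{(x)(k+1)}, p : 'I_k *)
Definition emb2 (T : pzRingType) k (p : 'I_k) (X : op N T 2) : op N T k.+1 :=
  let a := widen_ord (leqnSn k) p in
  let b := lift ord0 p in
  fun i j => X (pair2 (i a) (i b)) (pair2 (j a) (j b)) *
             ([forall l, ((l != a) && (l != b)) ==> (i l == j l)] %:R).

Definition flip (T : pzRingType) : op N T 2 :=
  fun i j => ((i ord0 == j ord_max) && (i ord_max == j ord0))%:R.

Definition ins_mid (i : idx N 2) (c : 'I_N) : idx N 3 :=
  [ffun t : 'I_3 => match val t with 0%N => i ord0 | 1%N => c | _ => i ord_max end].

Definition ptr_mid (T : pzRingType) (Z : op N T 3) : op N T 2 :=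
  fun i j => \sum_(c : 'I_N) Z (ins_mid i c) (ins_mid j c).

Definition trC (T : pzRingType) (Psi : op N T 2) : 'M[T]_N :=
  \matrix_(a, b) \sum_(c : 'I_N) Psi (pair2 c a) (pair2 c b).
Definition trD (T : pzRingType) (Psi : op N T 2) : 'M[T]_N :=
  \matrix_(a, b) \sum_(c : 'I_N) Psi (pair2 a c) (pair2 b c).

Notation "X '_1'" := (emb2 (ord0 : 'I_2) X) (at level 2).
Notation "X '_2'" := (emb2 (ord_max : 'I_2) X) (at level 2).

Definition skew_inv (T : pzRingType) (X Psi : op N T 2) :=
  opeq (ptr_mid (opmul X _1 Psi _2)) (@flip T) /\
  opeq (ptr_mid (opmul Psi _1 X _2)) (@flip T).

Definition strictly_skew_invertible (K : comUnitRingType) (X : op N K 2) :=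
  exists Psi, skew_inv X Psi /\ (trC Psi \in unitmx \/ trD Psi \in unitmx).

Definition op_inverse (T : pzRingType) k (X Xinv : op N T k) :=
  opeq (opmul X Xinv) (@opid T k) /\ opeq (opmul Xinv X) (@opid T k).

Definition R_matrix (T : pzRingType) (R Rinv : op N T 2) :=
  op_inverse R Rinv /\
  opeq (opmul (opmul R _1 R _2) R _1) (opmul (opmul R _2 R _1) R _2).

Definition compatible (T : pzRingType) (R F : op N T 2) :=
  opeq (opmul (opmul R _1 F _2) F _1) (opmul (opmul F _2 F _1) R _2) /\
  opeq (opmul (opmul R _2 F _1) F _2) (opmul (opmul F _1 F _2) R _1).

Definition Kop (K : fieldType) (q mu : K) (R : op N K 2) : op N K 2 :=
  opscale ((mu^-1) * (q - q^-1)^-1)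
    (opmul (opadd (opscale q (@opid K 2)) (opscale (-1) R))
           (opadd (opscale q^-1 (@opid K 2)) R)).

Definition BMW_type (K : fieldType) (q mu : K) (R Rinv : op N K 2) :=
  let KK := Kop q mu R in
  opeq (opmul (opmul (opadd (opscale q (@opid K 2)) (opscale (-1) R))
                     (opadd (opscale q^-1 (@opid K 2)) R))
              (opadd (opscale mu (@opid K 2)) (opscale (-1) R)))
       (@opzero K 2) /\
  opeq (opmul KK _2 KK _1) (opmul (opmul R _1 R _2) KK _1) /\
  opeq (opmul KK _2 KK _1) (opmul (opmul Rinv _1 Rinv _2) KK _1) /\
  opeq (opmul (opmul KK _1 KK _2) KK _1) KK _1.

Definition eta (K : fieldType) (q mu : K) : K :=
  (q - mu) * (q^-1 + mu) / (mu * (q - q^-1)).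

Section QMA.
Variables (K : fieldType) (A : algType K).
Variables (F Finv : op N K 2) (M : 'M[A]_N).

Definition inA (c : K) : A := c%:A.

(* M_{\bar (j+1)} on V^{(x)(k+1)}  (0-based j):
   M_{\bar 1} = M_1,  M_{\bar i} = F_{i-1} M_{\bar (i-1)} F_{i-1}^{-1} *)
Fixpoint Mbar (k : nat) (j : nat) : op N A k.+1 :=
  match j with
  | 0%N => emb1 ord0 M
  | j'.+1 =>
      match (insub j' : option 'I_k) with
      | Some p => opmul (opmul (emb2 p (opmap inA F)) (Mbar j'))
                        (emb2 p (opmap inA Finv))
      | None => @opzero A k.+1
      end
  end.
Arguments Mbar : clear implicits.

Definition Rtrace12 (DR : 'M[K]_N) (X : op N A 2) : A :=
  let DA := map_mx inA DR in
  \sum_(i : idx N 2)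
     opmul (opmul (emb1 (ord0 : 'I_2) DA) (emb1 (ord_max : 'I_2) DA)) X i i.

Definition QMA_relation (R : op N K 2) :=
  opeq (opmul (emb2 (ord0 : 'I_1) (opmap inA R)) (opmul (Mbar 1 0) (Mbar 1 1)))
       (opmul (opmul (Mbar 1 0) (Mbar 1 1)) (emb2 (ord0 : 'I_1) (opmap inA R))).

Definition gcontr (q mu : K) (R PsiR : op N K 2) : A :=
  (eta q mu)^-1 *: Rtrace12 (trD PsiR)
     (opmul (opmul (Mbar 1 0) (Mbar 1 1))
            (emb2 (ord0 : 'I_1) (opmap inA (Kop q mu R)))).

End QMA.
End Ops.
Arguments Mbar {N K A} F Finv M k j _ _.

From Pilot Require Import Defs.
From HB Require Import structures.
From mathcomp Require Import all_boot all_order all_algebra.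
From mathcomp Require Import zify ring.
From Stdlib Require Import FunctionalExtensionality.
Import GRing.Theory Num.Theory.
Set Implicit Arguments. Unset Strict Implicit. Unset Printing Implicit Defensive.
Local Open Scope ring_scope.

(* Contracting the BMW relations K_1 R_2 K_1 = mu^-1 K_1 and K_2 R_1 K_2 = mu^-1 K_2
   with the skew inverse of R shows that K factors through the invertible matrix C_R
   or D_R, so K has rank one; contracting K_2 K_1 K_2 = K_2 the same way shows that
   D_R (x) D_R acts on K as mu^2.  Hence for any X commuting with R, and so with K,
   X K = eta^-1 K X K = eta^-1 Tr(K X) K, while Tr_{R,(1,2)}(X K) = mu^2 Tr(K X): this
   is the case n = 1.  Conjugation by F_n F_{n+1} maps M_{\bar n} M_{\bar{n+1}} to
   M_{\bar{n+1}} M_{\bar{n+2}} (braid relation for F) and K_n to K_{n+1}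
   (compatibility of R and F), which gives the induction step. *)

Local Infix "*o" := opmul (at level 40, left associativity).
Local Notation "c *s X" := (opscale c X) (at level 40).

Lemma opext N T k (X Y : op N T k) : opeq X Y -> X = Y.
Proof. by move=> H; do 2 (apply: functional_extensionality => ?); exact: H. Qed.

Lemma natr_commr (T : pzRingType) (n : nat) (x : T) : n%:R * x = x * n%:R.
Proof. by rewrite (commr_nat x n). Qed.

Lemma sum_delta (T : pzRingType) (I : finType) (F : I -> T) (m0 : I) :
  \sum_(m : I) F m * (m == m0)%:R = F m0.
Proof.
rewrite (bigD1 m0) //= eqxx mulr1 big1 ?addr0 // => m /negbTE ->; exact: mulr0.
Qed.

Lemma sum_delta_sym (T : pzRingType) (I : finType) (F : I -> T) (m0 : I) :
  \sum_(m : I) F m * (m0 == m)%:R = F m0.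
Proof. by rewrite -(sum_delta F m0); apply: eq_bigr => m _; rewrite eq_sym. Qed.

Lemma sum_delta2 (T : pzRingType) (I : finType) (F : I -> I -> T) (i j : I) :
  \sum_z \sum_y F z y * ((y == j) && (i == z))%:R = F i j.
Proof.
rewrite -(sum_delta_sym (fun z => F z j) i); apply: eq_bigr => z _.
rewrite -(sum_delta (fun y => F z y * (i == z)%:R) j); apply: eq_bigr => y _.
by rewrite -mulnb mulnC natrM mulrA.
Qed.

Lemma sum_exchange_23 (T : pzRingType) (I : finType) (F : I -> I -> I -> I -> I -> T) :
  \sum_a \sum_b \sum_x \sum_y \sum_z F a b x y z =
  \sum_x \sum_y \sum_z \sum_a \sum_b F a b x y z.
Proof.
rewrite pair_big; under [RHS]eq_bigr do under eq_bigr do under eq_bigr do rewrite pair_big.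
rewrite [LHS]exchange_big; apply: eq_bigr => x _.
by rewrite [LHS]exchange_big; apply: eq_bigr => y _; rewrite [LHS]exchange_big.
Qed.

Section OpAlgebra.
Variables (N : nat) (T : pzRingType) (k : nat).
Implicit Types X Y Z : op N T k.
Local Notation "1" := (@opid N T k).

Lemma opmulA X Y Z : X *o Y *o Z = X *o (Y *o Z).
Proof.
apply: opext => i j; rewrite /opmul.
under eq_bigr do rewrite mulr_suml.
rewrite exchange_big; apply: eq_bigr => m _; rewrite mulr_sumr.
by apply: eq_bigr => l _; rewrite mulrA.
Qed.

Lemma opmul1l X : 1 *o X = X.
Proof.
apply: opext => i j; rewrite /opmul /opid -[RHS](sum_delta_sym (fun l => X l j) i).
by apply: eq_bigr => l _; rewrite natr_commr.
Qed.

Lemma opmul1r X : X *o 1 = X.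
Proof. by apply: opext => i j; rewrite /opmul /opid sum_delta. Qed.

Lemma opmulDl X Y Z : opadd X Y *o Z = opadd (X *o Z) (Y *o Z).
Proof.
by apply: opext => i j; rewrite /opmul /opadd -big_split; apply: eq_bigr => l _; exact: mulrDl. Qed.

Lemma opmulDr X Y Z : X *o opadd Y Z = opadd (X *o Y) (X *o Z).
Proof.
by apply: opext => i j; rewrite /opmul /opadd -big_split; apply: eq_bigr => l _; exact: mulrDr. Qed.

Lemma opmulZl c X Y : (c *s X) *o Y = c *s (X *o Y).
Proof.
by apply: opext => i j; rewrite /opmul /opscale mulr_sumr; apply: eq_bigr => l _; rewrite mulrA.
Qed.

Lemma opmulZr c X Y : (forall x : T, c * x = x * c) -> X *o (c *s Y) = c *s (X *o Y).
Proof.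
move=> Hc; apply: opext => i j; rewrite /opmul /opscale mulr_sumr.
by apply: eq_bigr => l _; rewrite mulrA -Hc mulrA.
Qed.

Lemma opscaleA a b X : a *s (b *s X) = (a * b) *s X.
Proof. by apply: opext => i j; rewrite /opscale mulrA. Qed.

Lemma opscale1 X : 1%R *s X = X.
Proof. by apply: opext => i j; rewrite /opscale mul1r. Qed.

Lemma opscale_zero c : c *s @opzero N T k = @opzero N T k.
Proof. by apply: opext => i j; rewrite /opscale mulr0. Qed.

Lemma opmul_mulr X Y g : X *o opmulr Y g = opmulr (X *o Y) g.
Proof.
by apply: opext => i j; rewrite /opmul /opmulr mulr_suml; apply: eq_bigr => l _; rewrite mulrA. Qed.

Lemma opmulr_mul X Y g : (forall i j, Y i j * g = g * Y i j) ->
  opmulr X g *o Y = opmulr (X *o Y) g.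
Proof.
move=> H; apply: opext => i j; rewrite /opmul /opmulr mulr_suml.
by apply: eq_bigr => l _; rewrite -!mulrA H.
Qed.

Lemma op_inverse_uniq a b X : a *o X = 1 -> X *o b = 1 -> a = b.
Proof. by move=> Ha Hb; rewrite -[a]opmul1r -Hb -opmulA Ha opmul1l. Qed.

End OpAlgebra.

Lemma opscale_cancel N (T : pzRingType) k (c d : T) (X Y : op N T k) :
  d * c = 1 -> c *s X = Y -> X = d *s Y.
Proof. by move=> Hdc <-; rewrite opscaleA Hdc opscale1. Qed.

Lemma opmulZrC N (C : comPzRingType) k c (X Y : op N C k) : X *o (c *s Y) = c *s (X *o Y).
Proof. by apply: opmulZr => x; rewrite mulrC. Qed.

Definition in_window (p w l : nat) : bool := (p <= l)%N && (l < p + w)%N.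

Section Window.
Variables (N k w p : nat).
Hypothesis Hk : (p + w <= k.+1)%N.
Local Notation in_window := (in_window p w).

Definition win (i : idx N k.+1) : idx N w := [ffun t : 'I_w => i (inord (p + t))].

Definition agree_off (i j : idx N k.+1) : bool :=
  [forall l : 'I_k.+1, in_window l || (i l == j l)].

Definition splice (i : idx N k.+1) (m : idx N w) : idx N k.+1 :=
  [ffun l : 'I_k.+1 => if (p <= l)%N then
     (match (insub (l - p)%N : option 'I_w) with Some t => m t | None => i l end)
     else i l].

Implicit Types (i j : idx N k.+1) (m : idx N w).

Lemma inord_windowK (t : 'I_w) : ((inord (p + t) : 'I_k.+1) : nat) = (p + t)%N.
Proof. by rewrite inordK //; have := ltn_ord t; lia. Qed.

Lemma in_windowP (l : 'I_k.+1) : in_window l -> exists t : 'I_w, l = inord (p + t).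
Proof.
rewrite /in_window => /andP [H1 H2]; have Ht : (l - p < w)%N by lia.
by exists (Ordinal Ht); apply: val_inj; rewrite /= inordK /=; lia.
Qed.

Lemma splice_in i m (t : 'I_w) : splice i m (inord (p + t)) = m t.
Proof. by rewrite /splice ffunE inord_windowK leq_addr addKn valK. Qed.

Lemma splice_out i m (l : 'I_k.+1) : ~~ in_window l -> splice i m l = i l.
Proof.
rewrite /in_window /splice ffunE => H; case: ifP => // Hp.
by rewrite insubN //; move: H; rewrite Hp /=; lia.
Qed.

Lemma win_splice i m : win (splice i m) = m.
Proof. by apply/ffunP => t; rewrite ffunE splice_in. Qed.

Lemma agree_off_splice i m : agree_off i (splice i m).
Proof.
by apply/forallP => l; case H: (in_window l) => //=; rewrite splice_out ?H.
Qed.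

Lemma splice_win i j : agree_off i j -> splice i (win j) = j.
Proof.
move=> /forallP Ho; apply/ffunP => x; case H: (in_window x).
  by case: (in_windowP H) => t ->; rewrite splice_in ffunE.
by rewrite splice_out ?H //; have := Ho x; rewrite H => /eqP.
Qed.

Lemma agree_off_refl i : agree_off i i.
Proof. by apply/forallP => l; rewrite eqxx orbT. Qed.

Lemma agree_offC i j : agree_off i j = agree_off j i.
Proof. by apply/forallP/forallP => H l; have := H l; rewrite eq_sym. Qed.

Lemma agree_off_trans i j l : agree_off i j -> agree_off j l = agree_off i l.
Proof.
have trans i1 i2 i3 : agree_off i1 i2 -> agree_off i2 i3 -> agree_off i1 i3.
  move=> /forallP H1 /forallP H2; apply/forallP => x; have := H1 x; have := H2 x.
  by case: (in_window x) => //= /eqP -> /eqP ->.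
move=> Hij; apply/idP/idP; first exact: trans.
by apply: trans; rewrite agree_offC.
Qed.

Lemma sum_agree_off (T : pzRingType) i (F : idx N k.+1 -> T) :
  \sum_l F l * (agree_off i l)%:R = \sum_m F (splice i m).
Proof.
rewrite (eq_bigr (fun l => if agree_off i l then F l else 0)); last first.
  by move=> l _; case: ifP; rewrite ?mulr1 ?mulr0.
rewrite -big_mkcond /= (reindex_onto (splice i) win (@splice_win i)) /=.
by apply: eq_bigl => m; rewrite agree_off_splice win_splice eqxx.
Qed.

End Window.
Arguments win {N k} w p i. Arguments agree_off {N k} w p i j.
Arguments splice {N k w} p i m.

Section Embedding.
Variables (N : nat) (T : pzRingType).

Definition embw k w p (X : op N T w) : op N T k.+1 :=
  fun i j => X (win w p i) (win w p j) * (agree_off w p i j)%:R.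
Arguments embw k {w} p X _ _.

Section FixedWindow.
Variables (k w p : nat).
Hypothesis Hk : (p + w <= k.+1)%N.

Lemma embw_mul (X Y : op N T w) : embw k p (X *o Y) = embw k p X *o embw k p Y.
Proof.
apply: opext => i j; rewrite /embw /opmul.
rewrite (eq_bigr (fun l => (X (win w p i) (win w p l) * Y (win w p l) (win w p j)
   * (agree_off w p l j)%:R) * (agree_off w p i l)%:R)); last first.
  by move=> l _; rewrite -!mulrA; congr (_ * _); rewrite natr_commr -!mulrA.
rewrite sum_agree_off // mulr_suml; apply: eq_bigr => m _.
by rewrite win_splice // (agree_off_trans _ (agree_off_splice Hk i m)).
Qed.

Lemma embw1 : embw k p (@opid N T w) = @opid N T k.+1.
Proof.
apply: opext => i j; rewrite /embw /opid -natrM mulnb; do 2 apply: congr1.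
apply/andP/eqP => [[/eqP Hw Ho]|->]; last by rewrite agree_off_refl.
by rewrite -(splice_win Hk Ho) -Hw splice_win // agree_off_refl.
Qed.

Lemma embwD (X Y : op N T w) : embw k p (opadd X Y) = opadd (embw k p X) (embw k p Y).
Proof. by apply: opext => i j; rewrite /embw /opadd mulrDl. Qed.

Lemma embwZ c (X : op N T w) : embw k p (c *s X) = c *s embw k p X.
Proof. by apply: opext => i j; rewrite /embw /opscale mulrA. Qed.

Lemma embw_opmulr (X : op N T w) g : embw k p (opmulr X g) = opmulr (embw k p X) g.
Proof. by apply: opext => i j; rewrite /embw /opmulr -!mulrA natr_commr. Qed.

End FixedWindow.

Lemma embw_full k (X : op N T k.+1) : embw k 0 X = X.
Proof.
apply: opext => i j; rewrite /embw.
have winE (l : idx N k.+1) : win k.+1 0 l = l.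
  by apply/ffunP => t; rewrite ffunE add0n; congr (l _); apply: val_inj; rewrite /= inordK.
rewrite !winE; have -> : agree_off k.+1 0 i j by apply/forallP => l; rewrite /in_window /= ltn_ord.
exact: mulr1.
Qed.

Section Composition.
Variables (k v p p' w' : nat).
Hypothesis Hk : (p + v.+1 <= k.+1)%N.
Hypothesis Hv : (p' + w' <= v.+1)%N.

Lemma win_win (i : idx N k.+1) : win w' p' (win v.+1 p i) = win w' (p + p') i.
Proof.
apply/ffunP => t; rewrite !ffunE; congr (i _); apply: val_inj.
have Et : ((inord (p' + t) : 'I_v.+1) : nat) = (p' + t)%N.
  by rewrite inordK //; have := ltn_ord t; lia.
by rewrite /= Et addnA.
Qed.

Lemma agree_off_comp (i j : idx N k.+1) :
  agree_off w' p' (win v.+1 p i) (win v.+1 p j) && agree_off v.+1 p i j =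
  agree_off w' (p + p') i j.
Proof.
apply/andP/forallP => [[/forallP H1 /forallP H2] l|H].
- case Hl: (in_window (p + p') w' l) => //=.
  case Hl2: (in_window p v.+1 l); last by have := H2 l; rewrite Hl2.
  case: (in_windowP Hk Hl2) => t Et; have := H1 t; rewrite !ffunE -Et.
  suff -> : in_window p' w' t = false by [].
  by move: Hl; rewrite Et /in_window inord_windowK //; lia.
- split; apply/forallP => l.
  + case Hl: (in_window p' w' l) => //=; rewrite !ffunE.
    have := H (inord (p + l)).
    suff -> : in_window (p + p') w' (inord (p + l) : 'I_k.+1) = false by [].
    by move: Hl; rewrite /in_window (inord_windowK Hk); lia.
  + case Hl: (in_window p v.+1 l) => //=; have := H l.
    suff -> : in_window (p + p') w' l = false by [].
    by move: Hl; rewrite /in_window; lia.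
Qed.

Lemma embw_comp (X : op N T w') : embw k p (embw v p' X) = embw k (p + p') X.
Proof. by apply: opext => i j; rewrite /embw -mulrA -natrM mulnb agree_off_comp !win_win. Qed.

End Composition.

Section Disjoint.
Variables (k p w p' w' : nat).
Hypothesis Hk1 : (p + w <= k.+1)%N.
Hypothesis Hk2 : (p' + w' <= k.+1)%N.
Hypothesis Hd : ((p + w <= p') || (p' + w' <= p))%N.

Definition agree_off2 (i j : idx N k.+1) :=
  [forall l : 'I_k.+1, in_window p w l || in_window p' w' l || (i l == j l)].

Lemma win_splice_disjoint (i : idx N k.+1) (m : idx N w) :
  win w' p' (splice p i m) = win w' p' i.
Proof.
apply/ffunP => t; rewrite ffunE [RHS]ffunE splice_out //.
by rewrite /in_window (inord_windowK Hk2); have := ltn_ord t; lia.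
Qed.

Lemma agree_off_splice_disjoint (i j : idx N k.+1) (m : idx N w) :
  agree_off w' p' (splice p i m) j = (m == win w p j) && agree_off2 i j.
Proof.
apply/forallP/andP => [H|[/eqP Hm /forallP H2] l].
- split.
  + apply/eqP/ffunP => t; have := H (inord (p + t)).
    have -> /= : in_window p' w' (inord (p + t) : 'I_k.+1) = false.
      by rewrite /in_window (inord_windowK Hk1); have := ltn_ord t; lia.
    by rewrite splice_in // ffunE => /eqP.
  + apply/forallP => l; case Hl: (in_window p w l) => //.
    case Hl': (in_window p' w' l) => //=.
    by have := H l; rewrite Hl' /= splice_out ?Hl.
- case Hl': (in_window p' w' l) => //=; case Hl: (in_window p w l).
  + by case: (in_windowP Hk1 Hl) => t ->; rewrite splice_in // Hm ffunE.
  + by rewrite splice_out ?Hl //; have := H2 l; rewrite Hl Hl'.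
Qed.

Lemma embw_disjointE (X : op N T w) (Y : op N T w') (i j : idx N k.+1) :
  (embw k p X *o embw k p' Y) i j =
  X (win w p i) (win w p j) * Y (win w' p' i) (win w' p' j) * (agree_off2 i j)%:R.
Proof.
rewrite /opmul /embw.
rewrite (eq_bigr (fun l => (X (win w p i) (win w p l) * (Y (win w' p' l) (win w' p' j)
   * (agree_off w' p' l j)%:R)) * (agree_off w p i l)%:R)); last first.
  by move=> l _; rewrite -!mulrA (natr_commr (agree_off w p i l)) -!mulrA.
rewrite sum_agree_off // -(sum_delta (fun m => X (win w p i) m *
  Y (win w' p' i) (win w' p' j) * (agree_off2 i j)%:R)); apply: eq_bigr => m _.
rewrite win_splice_disjoint agree_off_splice_disjoint -mulnb natrM win_splice //.
by rewrite (natr_commr (m == win w p j)) !mulrA.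
Qed.

End Disjoint.

Lemma embw_comm k p w p' w' (X : op N T w) (Y : op N T w') :
  (p + w <= k.+1)%N -> (p' + w' <= k.+1)%N -> ((p + w <= p') || (p' + w' <= p))%N ->
  (forall a b c d, X a b * Y c d = Y c d * X a b) ->
  embw k p X *o embw k p' Y = embw k p' Y *o embw k p X.
Proof.
move=> H1 H2 Hd Hc; apply: opext => i j.
rewrite embw_disjointE // embw_disjointE 1?orbC // Hc.
have -> : agree_off2 p' w' p w i j = agree_off2 p w p' w' i j.
  by apply: eq_forallb => l; rewrite (orbC (in_window p' w' l)).
by [].
Qed.

Lemma emb2E k (p : 'I_k) (X : op N T 2) : emb2 p X = embw k p X.
Proof.
apply: opext => i j; rewrite /emb2 /embw.
have winE (l : idx N k.+1) :
    pair2 (l (widen_ord (leqnSn k) p)) (l (lift ord0 p)) = win 2 p l.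
  apply/ffunP => t; rewrite !ffunE; have := ltn_ord p.
  by case: t => [[|[|t]] Ht] //= ?; congr (l _); apply: val_inj;
     rewrite /= inordK /bump //=; lia.
rewrite !winE; do 3 apply: congr1; apply: eq_forallb => l.
rewrite /in_window -!(inj_eq val_inj) /= /bump /=.
case: (l =P p :> nat) => [->|/eqP H1] /=; first by rewrite leqnn addn2 ltnS leqnSn.
case: (l =P p.+1 :> nat) => [->|/eqP H2] /=; first by rewrite leqnSn addn2 ltnSn.
suff -> : ((p <= l) && (l < p + 2))%N = false by [].
lia.
Qed.

Definition op1 (Y : 'M[T]_N) : op N T 1 := fun i j => Y (i ord0) (j ord0).

Lemma emb1E k (p : 'I_k.+1) (Y : 'M[T]_N) : emb1 p Y = embw k p (op1 Y).
Proof.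
apply: opext => i j; rewrite /emb1 /embw /op1 !ffunE.
have -> : (inord (p + @ord0 0) : 'I_k.+1) = p by apply: val_inj; rewrite /= addn0 inordK.
do 3 apply: congr1; apply: eq_forallb => l.
rewrite /in_window -!(inj_eq val_inj) /= addn1 ltnS.
case: (l =P p :> nat) => [->|/eqP H1] /=; first by rewrite leqnn.
suff -> : ((p <= l) && (l <= p))%N = false by [].
lia.
Qed.

End Embedding.
Arguments embw {N T} k {w} p X _ _.

Section Scalars.
Variables (N : nat) (C : fieldType) (A : algType C).
Local Notation iA := (@inA C A).

Lemma inAM (x y : C) : iA (x * y) = iA x * iA y.
Proof. by rewrite /inA mulr_algl scalerA. Qed.
Lemma inAD (x y : C) : iA (x + y) = iA x + iA y.
Proof. exact: scalerDl. Qed.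
Lemma inA_nat (n : nat) : iA n%:R = n%:R.
Proof. exact: scaler_nat. Qed.
Lemma inA_sum (I : finType) (F : I -> C) : iA (\sum_i F i) = \sum_i iA (F i).
Proof. exact: scaler_suml. Qed.
Lemma inA_central (x : C) (a : A) : iA x * a = a * iA x.
Proof. by rewrite /inA mulr_algl mulr_algr. Qed.

Definition central k (X : op N A k) := forall i j (a : A), X i j * a = a * X i j.

Lemma central_opmap k (X : op N C k) : central (opmap iA X).
Proof. by move=> i j a; exact: inA_central. Qed.

Lemma central_embw k w p (X : op N A w) : central X -> central (embw k p X).
Proof. by move=> H i j a; rewrite /embw -mulrA natr_commr mulrA H -mulrA. Qed.

Lemma central_mul k (X Y : op N A k) : central X -> central Y -> central (X *o Y).
Proof.
move=> HX HY i j a; rewrite /opmul mulr_suml mulr_sumr; apply: eq_bigr => l _.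
by rewrite -mulrA HY mulrA HX mulrA.
Qed.

Variable k : nat.
Implicit Types X Y : op N C k.

Lemma opmap_mul X Y : opmap iA (X *o Y) = opmap iA X *o opmap iA Y.
Proof.
by apply: opext => i j; rewrite /opmap /opmul inA_sum; apply: eq_bigr => l _; exact: inAM. Qed.
Lemma opmap_add X Y : opmap iA (opadd X Y) = opadd (opmap iA X) (opmap iA Y).
Proof. by apply: opext => i j; exact: inAD. Qed.
Lemma opmap_scale c X : opmap iA (c *s X) = iA c *s opmap iA X.
Proof. by apply: opext => i j; exact: inAM. Qed.
Lemma opmap_id : opmap iA (@opid N C k) = @opid N A k.
Proof. by apply: opext => i j; exact: inA_nat. Qed.

Lemma opmap_embw w p (X : op N C w) : opmap iA (embw k p X) = embw k p (opmap iA X).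
Proof. by apply: opext => i j; rewrite /opmap /embw inAM inA_nat. Qed.

End Scalars.

Section Quadratic.
Variables (N : nat) (T : pzRingType) (k : nat).

Definition op_quad (a b c : T) (X : op N T k) : op N T k :=
  opadd (a *s @opid N T k) (opadd (b *s X) (c *s (X *o X))).

Lemma op_quad_intertwine a b c (X Y G : op N T k) :
  (forall x, a * x = x * a) -> (forall x, b * x = x * b) -> (forall x, c * x = x * c) ->
  X *o G = G *o Y -> op_quad a b c X *o G = G *o op_quad a b c Y.
Proof.
move=> Ha Hb Hc H; rewrite /op_quad !opmulDl !opmulDr !opmulZl.
rewrite !(opmulZr _ _ Ha) !(opmulZr _ _ Hb) !(opmulZr _ _ Hc) opmul1l opmul1r.
by rewrite opmulA H -[X *o (G *o Y)]opmulA H opmulA.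
Qed.

End Quadratic.

Lemma op_quad_intertwineC N (C : comPzRingType) k a b c (X Y G : op N C k) :
  X *o G = G *o Y -> op_quad a b c X *o G = G *o op_quad a b c Y.
Proof. by apply: op_quad_intertwine => x; rewrite mulrC. Qed.

Lemma embw_quad N (T : pzRingType) k w p a b c (X : op N T w) : (p + w <= k.+1)%N ->
  embw k p (op_quad a b c X) = op_quad a b c (embw k p X).
Proof. by move=> Hk; rewrite /op_quad !embwD // !embwZ embw_mul // embw1. Qed.

Lemma opmap_quad N (C : fieldType) (A : algType C) k a b c (X : op N C k) :
  opmap (@inA C A) (op_quad a b c X) =
  op_quad (inA A a) (inA A b) (inA A c) (opmap (@inA C A) X).
Proof. by rewrite /op_quad !opmap_add !opmap_scale opmap_mul opmap_id. Qed.

Section Emb2.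
Variables (N : nat) (T : pzRingType) (k : nat) (p : 'I_k).
Let Hp : (p + 2 <= k.+1)%N. Proof. by have := ltn_ord p; lia. Qed.

Lemma emb2_mul (X Y : op N T 2) : emb2 p (X *o Y) = emb2 p X *o emb2 p Y.
Proof. by rewrite !emb2E embw_mul. Qed.
Lemma emb2_1 : emb2 p (@opid N T 2) = @opid N T k.+1.
Proof. by rewrite emb2E embw1. Qed.
Lemma emb2Z c (X : op N T 2) : emb2 p (c *s X) = c *s emb2 p X.
Proof. by rewrite !emb2E embwZ. Qed.
Lemma emb2_quad a b c (X : op N T 2) : emb2 p (op_quad a b c X) = op_quad a b c (emb2 p X).
Proof. by rewrite !emb2E embw_quad. Qed.

End Emb2.

Lemma emb2_ord0_1 N (T : pzRingType) (X : op N T 2) : emb2 (ord0 : 'I_1) X = X.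
Proof. by rewrite emb2E embw_full. Qed.

Section Indices.
Variables (N : nat) (T : pzRingType).

Definition tri (x y z : 'I_N) : idx N 3 :=
  [ffun t : 'I_3 => if val t == 0%N then x else if val t == 1%N then y else z].

Lemma pair2_eta (i : idx N 2) : i = pair2 (i ord0) (i ord_max).
Proof.
by apply/ffunP => t; rewrite ffunE; case: t => [[|[|t]] Ht] //=; congr (i _); apply: val_inj. Qed.

Lemma tri_eta (i : idx N 3) : i = tri (i ord0) (i (inord 1)) (i ord_max).
Proof.
apply/ffunP => t; rewrite ffunE.
by case: t => [[|[|[|t]]] Ht] //=; congr (i _); apply: val_inj; rewrite //= inordK.
Qed.

Lemma ins_mid_pair2 (a b c : 'I_N) : ins_mid (pair2 a b) c = tri a c b.
Proof. by apply/ffunP => t; rewrite !ffunE; case: t => [[|[|[|t]]] Ht]. Qed.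

Lemma sum_idx2 (F : idx N 2 -> T) : \sum_(i : idx N 2) F i = \sum_x \sum_y F (pair2 x y).
Proof.
rewrite pair_big /= (reindex (fun xy : 'I_N * 'I_N => pair2 xy.1 xy.2)) //=.
exists (fun i : idx N 2 => (i ord0, i ord_max)) => [[x y] _|i _] /=; first by rewrite !ffunE.
by rewrite -pair2_eta.
Qed.

Lemma sum_idx3 (F : idx N 3 -> T) :
  \sum_(i : idx N 3) F i = \sum_x \sum_y \sum_z F (tri x y z).
Proof.
under [RHS]eq_bigr do rewrite pair_big /=.
rewrite pair_big /= (reindex (fun xyz : 'I_N * ('I_N * 'I_N) => tri xyz.1 xyz.2.1 xyz.2.2)) //=.
exists (fun i : idx N 3 => (i ord0, (i (inord 1), i ord_max))) => [[x [y z]] _|i _] /=.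
  by rewrite !ffunE /= inordK.
by rewrite -tri_eta.
Qed.

Local Notation e1 := (emb2 (ord0 : 'I_2)).
Local Notation e2 := (emb2 (ord_max : 'I_2)).

Lemma emb2_0E (X : op N T 2) a b c d e f :
  e1 X (tri a b c) (tri d e f) = X (pair2 a b) (pair2 d e) * (c == f)%:R.
Proof.
rewrite /emb2 !ffunE /=; congr (_ * _); do 2 apply: congr1.
apply/forallP/idP => [H|/eqP Hcf l]; first by have := H ord_max; rewrite !ffunE.
by rewrite !ffunE; case: l => [[|[|[|l]]] Hl] //=; rewrite Hcf.
Qed.

Lemma emb2_1E (X : op N T 2) a b c d e f :
  e2 X (tri a b c) (tri d e f) = X (pair2 b c) (pair2 e f) * (a == d)%:R.
Proof.
rewrite /emb2 !ffunE /=; congr (_ * _); do 2 apply: congr1.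
apply/forallP/idP => [H|/eqP Had l]; first by have := H ord0; rewrite !ffunE.
by rewrite !ffunE; case: l => [[|[|[|l]]] Hl] //=; rewrite Had.
Qed.

Lemma emb2_0_mulE (X : op N T 2) (Y : op N T 3) a b c j :
  (e1 X *o Y) (tri a b c) j = \sum_x \sum_y X (pair2 a b) (pair2 x y) * Y (tri x y c) j.
Proof.
rewrite /opmul sum_idx3; apply: eq_bigr => x _; apply: eq_bigr => y _.
under eq_bigr do rewrite emb2_0E -mulrA natr_commr mulrA.
exact: sum_delta_sym.
Qed.

Lemma mul_emb2_0E (X : op N T 2) (Y : op N T 3) i d e f :
  (Y *o e1 X) i (tri d e f) = \sum_x \sum_y Y i (tri x y f) * X (pair2 x y) (pair2 d e).
Proof.
rewrite /opmul sum_idx3; apply: eq_bigr => x _; apply: eq_bigr => y _.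
by under eq_bigr do rewrite emb2_0E mulrA; exact: sum_delta.
Qed.

Lemma emb2_1_mulE (X : op N T 2) (Y : op N T 3) a b c j :
  (e2 X *o Y) (tri a b c) j = \sum_x \sum_y X (pair2 b c) (pair2 x y) * Y (tri a x y) j.
Proof.
rewrite /opmul sum_idx3 -(sum_delta_sym (fun x' => \sum_x \sum_y
  X (pair2 b c) (pair2 x y) * Y (tri x' x y) j) a).
apply: eq_bigr => x' _; rewrite mulr_suml; apply: eq_bigr => x _.
by rewrite mulr_suml; apply: eq_bigr => y _; rewrite emb2_1E -mulrA natr_commr !mulrA.
Qed.

Lemma mul_emb2_1E (X : op N T 2) (Y : op N T 3) i d e f :
  (Y *o e2 X) i (tri d e f) = \sum_x \sum_y Y i (tri d x y) * X (pair2 x y) (pair2 e f).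
Proof.
rewrite /opmul sum_idx3 -(sum_delta (fun x' => \sum_x \sum_y
  Y i (tri x' x y) * X (pair2 x y) (pair2 e f)) d).
apply: eq_bigr => x' _; rewrite mulr_suml; apply: eq_bigr => x _.
by rewrite mulr_suml; apply: eq_bigr => y _; rewrite emb2_1E mulrA.
Qed.

Lemma emb2_010E (X Y Z : op N T 2) a1 a2 c d1 d2 f :
  (e1 X *o e2 Y *o e1 Z) (tri a1 a2 c) (tri d1 d2 f) =
  \sum_x \sum_z (\sum_y X (pair2 a1 a2) (pair2 x y) * Y (pair2 y c) (pair2 z f))
                 * Z (pair2 x z) (pair2 d1 d2).
Proof.
rewrite mul_emb2_0E; apply: eq_bigr => x _; apply: eq_bigr => z _; congr (_ * _).
rewrite emb2_0_mulE -(sum_delta (fun x' => \sum_y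
  X (pair2 a1 a2) (pair2 x' y) * Y (pair2 y c) (pair2 z f)) x).
apply: eq_bigr => x' _; rewrite mulr_suml; apply: eq_bigr => y _.
by rewrite emb2_1E mulrA.
Qed.

Lemma emb2_101E (X Y Z : op N T 2) c a1 a2 f d1 d2 :
  (e2 X *o e1 Y *o e2 Z) (tri c a1 a2) (tri f d1 d2) =
  \sum_y \sum_x (\sum_u X (pair2 a1 a2) (pair2 u x) * Y (pair2 c u) (pair2 f y))
                 * Z (pair2 y x) (pair2 d1 d2).
Proof.
rewrite mul_emb2_1E; apply: eq_bigr => y _; apply: eq_bigr => x _; congr (_ * _).
rewrite emb2_1_mulE; apply: eq_bigr => u _.
rewrite -(sum_delta (fun v => X (pair2 a1 a2) (pair2 u v) * Y (pair2 c u) (pair2 f y)) x).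
by apply: eq_bigr => v _; rewrite emb2_0E mulrA.
Qed.

Lemma emb1_0E (Y : 'M[T]_N) a b c e :
  emb1 (ord0 : 'I_2) Y (pair2 a b) (pair2 c e) = Y a c * (b == e)%:R.
Proof.
rewrite /emb1 !ffunE /=; congr (_ * _); do 2 apply: congr1.
apply/forallP/idP => [H|/eqP Hbe l]; first by have := H ord_max; rewrite !ffunE.
by rewrite !ffunE; case: l => [[|[|l]] Hl] //=; rewrite Hbe.
Qed.

Lemma emb1_1E (Y : 'M[T]_N) a b c e :
  emb1 (ord_max : 'I_2) Y (pair2 a b) (pair2 c e) = Y b e * (a == c)%:R.
Proof.
rewrite /emb1 !ffunE /=; congr (_ * _); do 2 apply: congr1.
apply/forallP/idP => [H|/eqP Hac l]; first by have := H ord0; rewrite !ffunE.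
by rewrite !ffunE; case: l => [[|[|l]] Hl] //=; rewrite Hac.
Qed.

Lemma emb1_mulE (Y Y' : 'M[T]_N) a1 a2 x y :
  (emb1 (ord0 : 'I_2) Y *o emb1 (ord_max : 'I_2) Y') (pair2 a1 a2) (pair2 x y) = Y a1 x * Y' a2 y.
Proof.
rewrite /opmul sum_idx2 -(sum_delta (fun c => Y a1 c * Y' a2 y) x); apply: eq_bigr => c _.
rewrite -(sum_delta_sym (fun e => Y a1 c * Y' e y * (c == x)%:R) a2); apply: eq_bigr => e _.
rewrite emb1_0E emb1_1E -!mulrA; congr (_ * _).
by rewrite natr_commr -!mulrA; congr (_ * _); rewrite natr_commr.
Qed.

End Indices.

Lemma factor_rank_one N (C : fieldType) (X : op N C 2) (f : 'I_N -> 'I_N -> idx N 2)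
    (g1 g2 : idx N 2 -> 'I_N) (E : 'M[C]_N) (c : C) :
  (forall l, l = f (g1 l) (g2 l)) -> E \in unitmx -> c != 0 ->
  (forall a d j i, \sum_x X a (f x j) * X (f x i) d = c * X a d * E j i) ->
  forall a0 d0, X a0 d0 != 0 -> exists gam : idx N 2 -> C, forall m d, X m d = gam m * X a0 d.
Proof.
move=> Hf HE Hc H a0 d0 Hn.
pose P := \matrix_(x, j) X a0 (f x j).
pose Q d := \matrix_(x, i) X (f x i) d.
have HPQ d : P^T *m Q d = (c * X a0 d) *: E.
  by apply/matrixP => j i; rewrite !mxE -H; apply: eq_bigr => x _; rewrite !mxE.
have HPu : P^T \in unitmx.
  have : P^T *m Q d0 \in unitmx by rewrite HPQ unitmxZ // unitfE mulf_neq0.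
  by rewrite unitmx_mul => /andP [].
pose G := invmx (P^T) *m (c *: E).
exists (fun m => G (g1 m) (g2 m)) => m d.
have HQ : Q d = X a0 d *: G.
  by rewrite -(mulKmx HPu (Q d)) HPQ /G -!scalemxAr scalerA (mulrC c).
by have := congr1 (fun Z : 'M_N => Z (g1 m) (g2 m)) HQ; rewrite !mxE -Hf mulrC.
Qed.

Lemma mx_conj_factor (F : fieldType) n (U V D : 'M[F]_n) (m : F) : m != 0 ->
  U *m V = m^-1 *: D -> U *m D^T *m V = m *: 1%:M -> D *m U *m D^T = m ^+ 2 *: U.
Proof.
move=> Hm HUV HUDV.
have VUD : V *m (U *m D^T) = m *: 1%:M.
  have : (m^-1 *: (U *m D^T)) *m V = 1%:M by rewrite -scalemxAl HUDV scalerA mulVf // scale1r.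
  move/mulmx1C; rewrite -scalemxAr => /(congr1 (fun M => m *: M)).
  by rewrite scalerA mulfV // scale1r.
have HD : D = m *: (U *m V) by rewrite HUV scalerA mulfV // scale1r.
by rewrite {1}HD -!scalemxAl -!mulmxA VUD -scalemxAr mulmx1 scalerA expr2.
Qed.

Lemma opmul_swap N (T : pzRingType) k (X Y : op N T k) :
  X *o Y = Y *o X -> forall Z, X *o (Y *o Z) = Y *o (X *o Z).
Proof. by move=> H Z; rewrite -!opmulA H. Qed.

Section Conjugation.
Variables (N : nat) (T : pzRingType) (k : nat) (G Gi : op N T k).
Hypothesis GiG : Gi *o G = @opid N T k.

Definition op_conj (X : op N T k) := G *o X *o Gi.

Lemma op_conj_mul X Y : op_conj (X *o Y) = op_conj X *o op_conj Y.
Proof. by rewrite /op_conj !opmulA -[Gi *o (G *o _)]opmulA GiG opmul1l. Qed.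

Lemma op_conj_opmulr X g : (forall i j, Gi i j * g = g * Gi i j) ->
  op_conj (opmulr X g) = opmulr (op_conj X) g.
Proof. by move=> Hg; rewrite /op_conj opmul_mulr opmulr_mul. Qed.

Hypothesis GGi : G *o Gi = @opid N T k.

Lemma op_conjE X Y : Y *o G = G *o X -> op_conj X = Y.
Proof. by move=> H; rewrite /op_conj -H opmulA GGi opmul1r. Qed.

End Conjugation.

Section Mbar.
Variables (N : nat) (C : fieldType) (A : algType C) (F Finv : op N C 2) (M : 'M[A]_N).
Variable k : nat.
Hypothesis HF : R_matrix F Finv.
Local Notation iA := (@inA C A).
Local Notation Mb := (Mbar F Finv M k).
Local Notation F_ n := (embw k n (opmap iA F)).
Local Notation Fi_ n := (embw k n (opmap iA Finv)).

Lemma Mbar0 : Mb 0 = embw k 0 (op1 M).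
Proof. by rewrite /= emb1E. Qed.

Lemma MbarS j : (j < k)%N -> Mb j.+1 = F_ j *o Mb j *o Fi_ j.
Proof.
by move=> Hj; rewrite /= (insubT (fun j => j < k)%N Hj) !emb2E.
Qed.

Lemma Mbar_comm j (X : op N C 2) p : (j < p)%N -> (p + 2 <= k.+1)%N ->
  Mb j *o embw k p (opmap iA X) = embw k p (opmap iA X) *o Mb j.
Proof.
elim: j => [|j IH] Hp Hk.
  by rewrite Mbar0; apply: embw_comm => //; try lia; move=> *; rewrite /opmap inA_central.
have EF (Y : op N C 2) :
    embw k j (opmap iA Y) *o embw k p (opmap iA X) = embw k p (opmap iA X) *o embw k j (opmap iA Y).
  by apply: embw_comm => //; try lia; move=> *; exact: inA_central.
rewrite MbarS; last by lia.
by rewrite !opmulA EF (opmul_swap (IH _ _)) ?(opmul_swap (EF F)) //; lia.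
Qed.

Lemma F_inv n : (n + 2 <= k.+1)%N -> F_ n *o Fi_ n = @opid N A k.+1.
Proof. by move=> Hn; rewrite -embw_mul // -opmap_mul (opext HF.1.1) opmap_id embw1. Qed.

Lemma Finv_F n : (n + 2 <= k.+1)%N -> Fi_ n *o F_ n = @opid N A k.+1.
Proof. by move=> Hn; rewrite -embw_mul // -opmap_mul (opext HF.1.2) opmap_id embw1. Qed.

Lemma F_braid n : (n + 3 <= k.+1)%N -> F_ n *o F_ n.+1 *o F_ n = F_ n.+1 *o F_ n *o F_ n.+1.
Proof.
move=> Hn; have := congr1 (fun Z => embw k n (opmap iA Z)) (opext HF.2) => /=.
by rewrite !opmap_mul !emb2E !opmap_embw !embw_mul // !embw_comp //= addn0 addn1.
Qed.

Section Step.
Variable n : nat.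
Hypothesis Hn : (n + 3 <= k.+1)%N.
Local Notation G := (F_ n *o F_ n.+1).
Local Notation Gi := (Fi_ n.+1 *o Fi_ n).

Lemma F_pair_inv : Gi *o G = @opid N A k.+1 /\ G *o Gi = @opid N A k.+1.
Proof.
split.
  by rewrite opmulA -[Fi_ n *o _]opmulA Finv_F ?opmul1l ?Finv_F //; lia.
by rewrite opmulA -[F_ n.+1 *o _]opmulA F_inv ?opmul1l ?F_inv //; lia.
Qed.

Lemma Mbar_conj : op_conj G Gi (Mb n) = Mb n.+1 /\ op_conj G Gi (Mb n.+1) = Mb n.+2.
Proof.
have [GiG GGi] := F_pair_inv.
have MF1 : op_conj G Gi (Mb n) = Mb n.+1.
  rewrite /op_conj MbarS; last by lia.
  rewrite !opmulA (opmul_swap (esym (Mbar_comm _ _ _))) //; try lia.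
  by rewrite -[F_ n.+1 *o (Fi_ n.+1 *o _)]opmulA F_inv ?opmul1l //; lia.
split => //.
have braid : G *o F_ n = F_ n.+1 *o G by rewrite F_braid // opmulA.
have braid_inv : Fi_ n *o Gi = Gi *o Fi_ n.+1.
  apply: (@op_inverse_uniq _ _ _ _ _ (G *o F_ n)).
    by rewrite opmulA -[Gi *o _]opmulA GiG opmul1l Finv_F //; lia.
  by rewrite braid opmulA -[G *o _]opmulA GGi opmul1l F_inv //; lia.
have -> : Mb n.+2 = F_ n.+1 *o op_conj G Gi (Mb n) *o Fi_ n.+1 by rewrite MF1 MbarS //; lia.
rewrite /op_conj MbarS; last by lia.
transitivity (G *o F_ n *o Mb n *o (Fi_ n *o Gi)); first by rewrite !opmulA.
by rewrite braid braid_inv !opmulA.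
Qed.

End Step.

End Mbar.

Section BMW.
Variables (N : nat) (C : fieldType) (q mu : C) (R Rinv PsiR : op N C 2).
Hypothesis Hq0 : q != 0.
Hypothesis Hqq : q - q^-1 != 0.
Hypothesis Hmu : mu != 0.
Hypothesis Heta : Defs.eta q mu != 0.
Hypothesis HRm : R_matrix R Rinv.
Hypothesis HBMW : BMW_type q mu R Rinv.
Hypothesis Hskew : skew_inv R PsiR.
Hypothesis Hinv : trC PsiR \in unitmx \/ trD PsiR \in unitmx.
Local Notation K := (Kop q mu R).

Lemma Kop_quad : K = op_quad (mu^-1 * (q - q^-1)^-1) mu^-1 (- (mu^-1 * (q - q^-1)^-1)) R.
Proof.
have Hq2 : q * q - 1 != 0.
  by rewrite (_ : q * q - 1 = q * (q - q^-1)) ?mulf_neq0 //; field.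
apply: opext => i j; rewrite /Kop /op_quad /opscale /opmul /opadd /opid.
rewrite (eq_bigr (fun l => q * q^-1 * ((i == l)%:R * (l == j)%:R) + q * (R l j * (l == i)%:R)
   + (- q^-1) * (R i l * (l == j)%:R) + - (R i l * R l j))); last first.
  by move=> l _; rewrite (eq_sym l i); ring.
rewrite !big_split /= -!mulr_sumr sumrN !sum_delta.
by field; rewrite Hq0 Hq2 Hmu.
Qed.

Lemma KR : K *o R = mu *s K.
Proof.
have E : K *o opadd (mu *s @opid N C 2) (-1 *s R) = @opzero N C 2.
  by rewrite /Kop opmulZl (opext HBMW.1) opscale_zero.
rewrite opmulDr !opmulZrC opmul1r in E.
apply: opext => i j; have := congr1 (fun Z => Z i j) E.
by rewrite /opadd /opscale /opzero mulN1r => /eqP; rewrite addr_eq0 opprK => /eqP ->.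
Qed.

Lemma RK : R *o K = mu *s K.
Proof. by rewrite -KR Kop_quad; symmetry; apply: op_quad_intertwineC. Qed.

Lemma RinvK : Rinv *o K = mu^-1 *s K.
Proof.
apply: (opscale_cancel (mulVf Hmu)); rewrite -opmulZrC -RK -opmulA.
by rewrite (opext HRm.1.2) opmul1l.
Qed.

Lemma KRinv : K *o Rinv = mu^-1 *s K.
Proof.
apply: (opscale_cancel (mulVf Hmu)); rewrite -opmulZl -KR opmulA.
by rewrite (opext HRm.1.1) opmul1r.
Qed.

Lemma KK : K *o K = Defs.eta q mu *s K.
Proof.
have Hq2 : q * q - 1 != 0.
  by rewrite (_ : q * q - 1 = q * (q - q^-1)) ?mulf_neq0 //; field.
rewrite {2}Kop_quad /op_quad !opmulDr !opmulZrC opmul1r -opmulA KR opmulZl KR !opscaleA.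
apply: opext => i j; rewrite /opadd /opscale /Defs.eta.
by field; rewrite Hmu Hq0 Hq2.
Qed.

Local Notation K1 := (emb2 (ord0 : 'I_2) K).
Local Notation K2 := (emb2 (ord_max : 'I_2) K).
Local Notation R1 := (emb2 (ord0 : 'I_2) R).
Local Notation R2 := (emb2 (ord_max : 'I_2) R).
Local Notation Ri1 := (emb2 (ord0 : 'I_2) Rinv).
Local Notation Ri2 := (emb2 (ord_max : 'I_2) Rinv).

Let K1K2K1 : K1 *o K2 *o K1 = K1 := opext HBMW.2.2.2.
Let K2K1_R : K2 *o K1 = R1 *o R2 *o K1 := opext HBMW.2.1.
Let K2K1_Rinv : K2 *o K1 = Ri1 *o Ri2 *o K1 := opext HBMW.2.2.1.

Lemma K1R2K1 : K1 *o R2 *o K1 = mu^-1 *s K1.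
Proof.
apply: (opscale_cancel (mulVf Hmu)); rewrite -{3}K1K2K1 [RHS]opmulA K2K1_R !opmulA.
by rewrite -[K1 *o (R1 *o _)]opmulA -emb2_mul KR emb2Z opmulZl.
Qed.

Lemma K1Rinv2K1 : K1 *o Ri2 *o K1 = mu *s K1.
Proof.
apply: (opscale_cancel (mulfV Hmu)); rewrite -{3}K1K2K1 [RHS]opmulA K2K1_Rinv !opmulA.
by rewrite -[K1 *o (Ri1 *o _)]opmulA -emb2_mul KRinv (emb2Z _ mu^-1 K) opmulZl.
Qed.

Lemma K2R1R2 : K2 *o (R1 *o R2) = R1 *o R2 *o K1.
Proof.
rewrite Kop_quad !emb2_quad; apply: op_quad_intertwineC.
by rewrite -opmulA (opext HRm.2) opmulA.
Qed.

Lemma K2K1K2 : K2 *o K1 *o K2 = K2.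
Proof.
have K2E : K2 = R1 *o R2 *o K1 *o (Ri2 *o Ri1).
  rewrite -K2R1R2 !opmulA -[R2 *o (Ri2 *o Ri1)]opmulA.
  by rewrite -emb2_mul (opext HRm.1.1) emb2_1 opmul1l -emb2_mul (opext HRm.1.1) emb2_1 opmul1r.
have K1RinvK1 V : K1 *o (Ri2 *o (Ri1 *o (K1 *o V))) = K1 *o V.
  rewrite -[Ri1 *o (K1 *o V)]opmulA -emb2_mul RinvK (emb2Z _ mu^-1 K) opmulZl !opmulZrC.
  by rewrite -!opmulA K1Rinv2K1 opmulZl opscaleA mulVf // opscale1.
have K1RK1 V : K1 *o (R1 *o (R2 *o (K1 *o V))) = K1 *o V.
  rewrite -[K1 *o (R1 *o _)]opmulA -emb2_mul KR (emb2Z _ mu K) opmulZl.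
  by rewrite -!opmulA K1R2K1 opmulZl opscaleA mulfV // opscale1.
by rewrite K2E !opmulA K1RinvK1 K1RK1.
Qed.

Lemma K2R1K2 : K2 *o R1 *o K2 = mu^-1 *s K2.
Proof.
apply: (opscale_cancel (mulVf Hmu)); rewrite -{3}K2K1K2 K2K1_R -K2R1R2.
by rewrite !opmulA -[R2 *o K2]emb2_mul RK (emb2Z _ mu K) !opmulZrC.
Qed.

Lemma skew_R_PsiE i1 i3 j1 j3 :
  \sum_c \sum_y R (pair2 i1 c) (pair2 j1 y) * PsiR (pair2 y i3) (pair2 c j3) =
  ((i1 == j3) && (i3 == j1))%:R.
Proof.
have := Hskew.1 (pair2 i1 i3) (pair2 j1 j3); rewrite /ptr_mid /flip !ffunE /= => <-.
apply: eq_bigr => c _; rewrite !ins_mid_pair2 emb2_0_mulE.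
rewrite -(sum_delta (fun x =>
  \sum_y R (pair2 i1 c) (pair2 x y) * PsiR (pair2 y i3) (pair2 c j3)) j1).
by apply: eq_bigr => x _; rewrite mulr_suml; apply: eq_bigr => y _; rewrite emb2_1E mulrA.
Qed.

Lemma skew_Psi_RE i1 i3 j1 j3 :
  \sum_c \sum_y PsiR (pair2 i1 c) (pair2 j1 y) * R (pair2 y i3) (pair2 c j3) =
  ((i1 == j3) && (i3 == j1))%:R.
Proof.
have := Hskew.2 (pair2 i1 i3) (pair2 j1 j3); rewrite /ptr_mid /flip !ffunE /= => <-.
apply: eq_bigr => c _; rewrite !ins_mid_pair2 emb2_0_mulE.
rewrite -(sum_delta (fun x =>
  \sum_y PsiR (pair2 i1 c) (pair2 x y) * R (pair2 y i3) (pair2 c j3)) j1).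
by apply: eq_bigr => x _; rewrite mulr_suml; apply: eq_bigr => y _; rewrite emb2_1E mulrA.
Qed.

Lemma Kop_contract_trC a d i j :
  \sum_x K a (pair2 x j) * K (pair2 x i) d = mu^-1 * trC PsiR i j * K a d.
Proof.
have K1R2K1E c f :
    \sum_x \sum_z (\sum_y K a (pair2 x y) * R (pair2 y c) (pair2 z f)) * K (pair2 x z) d
    = mu^-1 * K a d * (c == f)%:R.
  have := congr1 (fun Z => Z (tri (a ord0) (a ord_max) c) (tri (d ord0) (d ord_max) f)) K1R2K1.
  by rewrite /= emb2_010E /opscale emb2_0E -!pair2_eta mulrA.
(* S is evaluated once with K_1 R_2 K_1 = mu^-1 K_1 and once with the skew inverse. *)
set S := \sum_c \sum_f (\sum_x \sum_z (\sum_y K a (pair2 x y) * R (pair2 y c) (pair2 z f))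
   * K (pair2 x z) d) * PsiR (pair2 f i) (pair2 c j).
have -> : mu^-1 * trC PsiR i j * K a d = S.
  rewrite /S mxE mulrAC mulr_sumr; apply: eq_bigr => c _; under eq_bigr do rewrite K1R2K1E.
  rewrite -(sum_delta_sym (fun f => mu^-1 * K a d * PsiR (pair2 f i) (pair2 c j)) c).
  by apply: eq_bigr => f _; rewrite mulrAC.
symmetry; rewrite /S.
transitivity (\sum_c \sum_f \sum_x \sum_z \sum_y K a (pair2 x y) * K (pair2 x z) d
    * (R (pair2 y c) (pair2 z f) * PsiR (pair2 f i) (pair2 c j))).
  apply: eq_bigr => c _; apply: eq_bigr => f _; rewrite mulr_suml; apply: eq_bigr => x _.
  rewrite mulr_suml; apply: eq_bigr => z _; rewrite !mulr_suml; apply: eq_bigr => y _.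
  by ring.
rewrite sum_exchange_23; apply: eq_bigr => x _.
rewrite -(sum_delta2 (fun z y => K a (pair2 x y) * K (pair2 x z) d)).
apply: eq_bigr => z _; apply: eq_bigr => y _.
by rewrite -skew_R_PsiE mulr_sumr; apply: eq_bigr => c _; rewrite mulr_sumr.
Qed.

Lemma Kop_contract_trD a d i j :
  \sum_x K a (pair2 j x) * K (pair2 i x) d = mu^-1 * trD PsiR i j * K a d.
Proof.
have K2R1K2E c f :
    \sum_y \sum_x (\sum_u K a (pair2 u x) * R (pair2 c u) (pair2 f y)) * K (pair2 y x) d
    = mu^-1 * K a d * (c == f)%:R.
  have := congr1 (fun Z => Z (tri c (a ord0) (a ord_max)) (tri f (d ord0) (d ord_max))) K2R1K2.
  by rewrite /= emb2_101E /opscale emb2_1E -!pair2_eta mulrA.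
set S := \sum_f \sum_c (\sum_y \sum_x (\sum_u K a (pair2 u x) * R (pair2 c u) (pair2 f y))
   * K (pair2 y x) d) * PsiR (pair2 i f) (pair2 j c).
have -> : mu^-1 * trD PsiR i j * K a d = S.
  rewrite /S mxE mulrAC mulr_sumr; apply: eq_bigr => f _; under eq_bigr do rewrite K2R1K2E.
  rewrite -(sum_delta (fun c => mu^-1 * K a d * PsiR (pair2 i f) (pair2 j c)) f).
  by apply: eq_bigr => c _; rewrite mulrAC.
symmetry; rewrite /S.
transitivity (\sum_f \sum_c \sum_y \sum_x \sum_u K a (pair2 u x) * K (pair2 y x) d
    * (PsiR (pair2 i f) (pair2 j c) * R (pair2 c u) (pair2 f y))).
  apply: eq_bigr => f _; apply: eq_bigr => c _; rewrite mulr_suml; apply: eq_bigr => y _.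
  rewrite mulr_suml; apply: eq_bigr => x _; rewrite !mulr_suml; apply: eq_bigr => u _.
  by ring.
rewrite sum_exchange_23 exchange_big; apply: eq_bigr => x _.
rewrite -(sum_delta2 (fun y u => K a (pair2 u x) * K (pair2 y x) d)).
apply: eq_bigr => y _; apply: eq_bigr => u _.
by rewrite andbC -skew_Psi_RE mulr_sumr; apply: eq_bigr => f _; rewrite mulr_sumr.
Qed.

Lemma trD_contract_Kop a d c f :
  (\sum_y \sum_z trD PsiR z y * K (pair2 c y) (pair2 f z)) * (mu^-1 * K a d) =
  K a d * (c == f)%:R.
Proof.
have := congr1 (fun Z => Z (tri c (a ord0) (a ord_max)) (tri f (d ord0) (d ord_max))) K2K1K2.
rewrite /= emb2_101E emb2_1E -!pair2_eta => <-.
rewrite mulr_suml; under eq_bigr do rewrite mulr_suml.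
rewrite exchange_big; apply: eq_bigr => z _; under [RHS]eq_bigr do rewrite mulr_suml.
rewrite [RHS]exchange_big; apply: eq_bigr => y _.
transitivity (K (pair2 c y) (pair2 f z) * (mu^-1 * trD PsiR z y * K a d)); first by ring.
by rewrite -Kop_contract_trD mulr_sumr; apply: eq_bigr => x _; ring.
Qed.

(* This is where the strict skew invertibility of R is used. *)
Lemma Kop_rank_one : (forall a d, K a d = 0) \/
  exists a0 d0 (gam : idx N 2 -> C), K a0 d0 != 0 /\ forall m d, K m d = gam m * K a0 d.
Proof.
have [/existsP [a0 /existsP [d0 Hn]]|H0] := boolP [exists a, exists d, K a d != 0]; last first.
  left => a d; move: H0; rewrite negb_exists => /forallP /(_ a).
  by rewrite negb_exists => /forallP /(_ d); rewrite negbK => /eqP.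
right; exists a0, d0; have Hmu1 : mu^-1 != 0 by rewrite invr_eq0.
case: Hinv => Hu.
- have HE a d j i : \sum_x K a (pair2 x j) * K (pair2 x i) d = mu^-1 * K a d * (trC PsiR)^T j i.
    by rewrite Kop_contract_trC mulrAC !mxE.
  have [gam Hg] := @factor_rank_one N C K (fun x j => pair2 x j) (fun l => l ord0)
    (fun l => l ord_max) (trC PsiR)^T mu^-1 (@pair2_eta N)
    (ltac:(by rewrite unitmx_tr)) Hmu1 HE _ _ Hn.
  by exists gam.
- have HE a d j i : \sum_x K a (pair2 j x) * K (pair2 i x) d = mu^-1 * K a d * (trD PsiR)^T j i.
    by rewrite Kop_contract_trD mulrAC !mxE.
  have [gam Hg] := @factor_rank_one N C K (fun x j => pair2 j x) (fun l => l ord_max)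
    (fun l => l ord0) (trD PsiR)^T mu^-1 (@pair2_eta N)
    (ltac:(by rewrite unitmx_tr)) Hmu1 HE _ _ Hn.
  by exists gam.
Qed.

Lemma Kop_exchange i l m j : K i l * K m j = K m l * K i j.
Proof.
case: Kop_rank_one => [H0|[a0 [d0 [gam [_ Hg]]]]]; first by rewrite !H0 !mul0r.
by rewrite (Hg i l) (Hg m j) (Hg m l) (Hg i j); ring.
Qed.

Lemma trD_trD_Kop a1 a2 d :
  \sum_x \sum_y trD PsiR a1 x * trD PsiR a2 y * K (pair2 x y) d = mu ^+ 2 * K (pair2 a1 a2) d.
Proof.
case: Kop_rank_one => [H0|[a0 [d0 [gam [Hn Hg]]]]].
  by rewrite H0 mulr0 big1 // => x _; rewrite big1 // => y _; rewrite H0 mulr0.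
pose U := \matrix_(x, y) gam (pair2 x y).
pose W := \matrix_(x, y) K a0 (pair2 x y).
have HUW : U *m W^T = mu^-1 *: trD PsiR.
  apply/matrixP => i j; apply: (mulIf Hn).
  rewrite [in RHS]mxE -Kop_contract_trD [in LHS]mxE mulr_suml.
  by apply: eq_bigr => x _; rewrite !mxE (Hg (pair2 i x) d0); ring.
have HUDW : U *m (trD PsiR)^T *m W^T = mu *: 1%:M.
  apply/matrixP => c f; have Hm1 : mu^-1 * K a0 d0 != 0 by rewrite mulf_neq0 // invr_eq0.
  apply: (mulIf Hm1); rewrite !mxE.
  transitivity ((\sum_z \sum_y trD PsiR z y * K (pair2 c y) (pair2 f z)) * (mu^-1 * K a0 d0)).
    congr (_ * _); apply: eq_bigr => z _; rewrite !mxE mulr_suml; apply: eq_bigr => y _.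
    by rewrite !mxE (Hg (pair2 c y) (pair2 f z)); ring.
  by rewrite exchange_big /= trD_contract_Kop; field.
have := congr1 (fun Z : 'M_N => Z a1 a2) (mx_conj_factor Hmu HUW HUDW); rewrite !mxE => HE.
rewrite (Hg (pair2 a1 a2) d) mulrA -HE mulr_suml [LHS]exchange_big /=; apply: eq_bigr => y _.
rewrite !mxE !mulr_suml; apply: eq_bigr => x _.
by rewrite !mxE (Hg (pair2 x y) d); ring.
Qed.

Variable A : algType C.
Local Notation iA := (@inA C A).
Local Notation KA := (opmap iA K).
Local Notation RA := (opmap iA R).

Lemma KA_commute (X : op N A 2) : RA *o X = X *o RA -> KA *o X = X *o KA.
Proof.
move=> H; rewrite Kop_quad opmap_quad.
by apply: op_quad_intertwine => // x; exact: inA_central.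
Qed.

Lemma trD_trD_KA : emb1 (ord0 : 'I_2) (map_mx iA (trD PsiR)) *o
    emb1 (ord_max : 'I_2) (map_mx iA (trD PsiR)) *o KA = iA (mu ^+ 2) *s KA.
Proof.
apply: opext => a d; rewrite /opmul /opscale /opmap (pair2_eta a) sum_idx2.
rewrite -inAM -trD_trD_Kop inA_sum; apply: eq_bigr => x _.
rewrite inA_sum; apply: eq_bigr => y _.
by have := emb1_mulE (map_mx iA (trD PsiR)) (map_mx iA (trD PsiR)) (a ord0) (a ord_max) x y;
   rewrite /opmul => ->; rewrite !mxE !inAM.
Qed.

Lemma KA_contraction (X : op N A 2) : RA *o X = X *o RA ->
  X *o KA = opmulr (opmap (fun c => iA (mu ^- 2 * c)) K)
                   ((Defs.eta q mu)^-1 *: Rtrace12 (trD PsiR) (X *o KA)).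
Proof.
move=> H; have Hc := KA_commute H.
set trKX := \sum_(l : idx N 2) \sum_(p : idx N 2) iA (K p l) * X l p.
have XK_KXK : X *o KA = iA (Defs.eta q mu)^-1 *s (KA *o X *o KA).
  rewrite [in RHS]Hc [in RHS]opmulA -opmulZr; last by move=> x; exact: inA_central.
  by rewrite -opmap_mul KK opmap_scale opscaleA -inAM mulVf // /inA scale1r opscale1.
have KXK_rank_one i j : (KA *o X *o KA) i j = iA (K i j) * trKX.
  rewrite /opmul; under eq_bigr do rewrite mulr_suml.
  rewrite exchange_big /= /trKX mulr_sumr; apply: eq_bigr => l _.
  rewrite mulr_sumr; apply: eq_bigr => p _.
  rewrite /opmap /inA !mulr_algl mulr_algr !scalerA; congr (_ *: _).
  by rewrite mulrC Kop_exchange mulrC.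
have Rtrace_XK : Rtrace12 (trD PsiR) (X *o KA) = iA (mu ^+ 2) * trKX.
  rewrite /Rtrace12 -Hc -opmulA trD_trD_KA opmulZl /opscale -mulr_sumr; congr (_ * _).
  by rewrite /trKX exchange_big.
apply: opext => i j; rewrite {1}XK_KXK /opscale KXK_rank_one /opmulr Rtrace_XK.
rewrite /opmap /inA !mulr_algl !scalerA.
by congr (_ *: _); field; rewrite Hmu Heta.
Qed.

Variables (F Finv : op N C 2) (M : 'M[A]_N).
Hypothesis HF : R_matrix F Finv.
Hypothesis Hcomp : compatible R F.
Hypothesis HQMA : QMA_relation F Finv M R.
Local Notation MM k n := (Mbar F Finv M k n *o Mbar F Finv M k n.+1).
Local Notation g := (gcontr F Finv M q mu R PsiR).
Local Notation K_ s k n := (embw k n (opmap iA (s *s K))).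
Local Notation G_ k n := (embw k n (opmap iA F) *o embw k n.+1 (opmap iA F)).
Local Notation Gi_ k n := (embw k n.+1 (opmap iA Finv) *o embw k n (opmap iA Finv)).

Lemma MM_KA_base :
  KA *o MM 1 0 = MM 1 0 *o KA /\ MM 1 0 *o KA = opmulr (opmap iA (mu ^- 2 *s K)) g.
Proof.
have HR : RA *o MM 1 0 = MM 1 0 *o RA by have := opext HQMA; rewrite emb2_ord0_1.
split; first exact: KA_commute.
by rewrite (KA_contraction HR) /gcontr emb2_ord0_1.
Qed.

Lemma KA_F_intertwine s k n : (n + 3 <= k.+1)%N ->
  K_ s k n.+1 *o G_ k n = G_ k n *o K_ s k n.
Proof.
move=> Hn.
have H3 : emb2 (ord_max : 'I_2) (s *s K) *o (emb2 (ord0 : 'I_2) F *o emb2 (ord_max : 'I_2) F) =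
          emb2 (ord0 : 'I_2) F *o emb2 (ord_max : 'I_2) F *o emb2 (ord0 : 'I_2) (s *s K).
  rewrite Kop_quad !emb2Z !emb2_quad opmulZl opmulZrC; congr (_ *s _).
  by apply: op_quad_intertwineC; rewrite -opmulA (opext Hcomp.2).
have := congr1 (fun Z => embw k n (opmap iA Z)) H3 => /=.
by rewrite !opmap_mul !emb2E !opmap_embw !embw_mul // !embw_comp //= addn0 addn1.
Qed.

Lemma MM_KA k n : (n < k)%N ->
  K_ 1 k n *o MM k n = MM k n *o K_ 1 k n /\
  MM k n *o K_ 1 k n = opmulr (K_ (mu ^- 2) k n) g.
Proof.
elim: n => [Hk|n IH Hn].
  have -> : MM k 0 = embw k 0 (MM 1 0).
    rewrite [Mbar _ _ _ k 1]MbarS // [Mbar _ _ _ 1 1]MbarS // !Mbar0 !embw_mul //; try lia.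
    by rewrite !(embw_comp (v := 1)).
  have [H1 H2] := MM_KA_base.
  by rewrite opscale1 -!embw_mul ?H1 ?H2 ?embw_opmulr //; lia.
have [IH1 IH2] := IH ltac:(lia).
have Hn3 : (n + 3 <= k.+1)%N by lia.
have [GiG GGi] := @F_pair_inv N C A F Finv k HF n Hn3.
have [MC1 MC2] := @Mbar_conj N C A F Finv M k HF n Hn3.
have KE s : op_conj (G_ k n) (Gi_ k n) (K_ s k n) = K_ s k n.+1.
  by apply: op_conjE => //; exact: KA_F_intertwine.
have MME : op_conj (G_ k n) (Gi_ k n) (MM k n) = MM k n.+1 by rewrite op_conj_mul // MC1 MC2.
have Gi_g i j : Gi_ k n i j * g = g * Gi_ k n i j.
  by apply: central_mul; apply: central_embw; exact: central_opmap.
rewrite -(KE 1) -(KE (mu ^- 2)) -MME -!op_conj_mul // IH1; split => //.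
by rewrite IH2 op_conj_opmulr.
Qed.

End BMW.

Lemma q_sub_qinv_neq0 (K : fieldType) (q : K) : q != 0 -> q != 1 -> q != -1 -> q - q^-1 != 0.
Proof.
move=> Hq0 Hq1 Hqm1; rewrite (_ : q - q^-1 = (q - 1) * (q + 1) / q); last by field.
by rewrite !mulf_neq0 ?invr_eq0 ?subr_eq0 // addr_eq0.
Qed.

Lemma eta_neq0 (K : fieldType) (q mu : K) :
  q != 0 -> q != 1 -> q != -1 -> mu != 0 -> mu != q -> mu != - q^-1 -> Defs.eta q mu != 0.
Proof.
move=> Hq0 Hq1 Hqm1 Hmu Hmuq Hmuq'.
rewrite /Defs.eta !mulf_neq0 ?invr_eq0 ?mulf_neq0 ?q_sub_qinv_neq0 // ?subr_eq0 1?eq_sym //.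
by rewrite eq_sym addrC addr_eq0.
Qed.

Unset Implicit Arguments.
Theorem lemma4p6 (C : numClosedFieldType) (N : nat) (q mu : C)
    (R Rinv F Finv PsiR : op N C 2) (A : algType C) (M : 'M[A]_N) :
  q != 0 -> q != 1 -> q != -1 ->
  mu != 0 -> mu != q -> mu != - q^-1 ->
  R_matrix R Rinv -> R_matrix F Finv -> compatible R F ->
  skew_inv R PsiR -> (trC PsiR \in unitmx \/ trD PsiR \in unitmx) ->
  strictly_skew_invertible F ->
  BMW_type q mu R Rinv ->
  QMA_relation F Finv M R ->
  forall (k : nat) (n : 'I_k),
    let Kn := emb2 n (opmap (@inA C A) (Kop q mu R)) in
    let MM := opmul (Mbar F Finv M k n) (Mbar F Finv M k n.+1) in
    opeq (opmul Kn MM) (opmul MM Kn) /\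
    opeq (opmul MM Kn)
         (opmulr (emb2 n (opmap (fun c => @inA C A (mu ^- 2 * c)) (Kop q mu R)))
                 (gcontr F Finv M q mu R PsiR)).
Proof.
move=> Hq0 Hq1 Hqm1 Hmu Hmuq Hmuq' HR HF Hcomp Hskew Hinv _ HBMW HQMA k n Kn MM.
have [H1 H2] := MM_KA Hq0 (q_sub_qinv_neq0 Hq0 Hq1 Hqm1) Hmu (eta_neq0 Hq0 Hq1 Hqm1 Hmu Hmuq Hmuq')
  HR HBMW Hskew Hinv HF Hcomp HQMA (ltn_ord n).
rewrite opscale1 in H1 H2.
by rewrite /Kn /MM !emb2E; split => i j; rewrite ?H1 ?H2.
Qed.
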